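(* Let $n\ge 2$ and let $A_1,\ldots,A_{n+1}$ be pairwise skew $(n-1)$-spaces of $\mathrm{PG}(2n,q)$. The number of $n$-spaces of $\mathrm{PG}(2n,q)$ that intersect every $A_i$, $1\leq i\leq n+1$, is $\mathcal{O}(q^{n^2-1})$.
   Context: $\mathrm{PG}(2n,q)$ is the projective space of projective dimension $2n$ over the field of order $q$; an $i$-space is a subspace of projective dimension $i$; skew means disjoint. $\mathcal{O}(q^m)$ means bounded above by $Cq^m$ with $C$ depending only on $n$. *)

(* Projective geometry PG(N-1, F) over a finite field F is
   modelled by the row space F^N ('rV[F]_N); a projective k-space is a vector
   subspace of dimension k+1, represented canonically (via mxalgebra) by a
   square matrix U with <<U>>%MS = U and \rank U = k+1. *)
From HB Require Import structures.
From mathcomp Require Import all_boot all_order all_algebra.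
Set Implicit Arguments. Unset Strict Implicit. Unset Printing Implicit Defensive.
Import GRing.Theory.
Local Open Scope ring_scope.

Definition proj_spaces (F : finFieldType) (N k : nat) : {set 'M[F]_N} :=
  [set U : 'M[F]_N | (<<U>>%MS == U) && (\rank U == k.+1)%N].

Definition skew_spaces (F : fieldType) (N : nat) (U V : 'M[F]_N) : Prop :=
  \rank (U :&: V)%MS = 0%N.

Definition meets (F : fieldType) (N : nat) (U V : 'M[F]_N) : bool :=
  (0 < \rank (U :&: V)%MS)%N.

(* Pick a point p_i of U on each A_i.  If p_0, ..., p_n are independent they
   span U, and there are O(q^((n-1)(n+1))) = O(q^(n^2-1)) such tuples.
   Otherwise let j be the first index with p_j in S = <p_0, ..., p_(j-1)>, a
   subspace of rank j; U is one of O(q^(n(n+1-j))) spaces through S.  Writing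
   p_j = sum_i c_i p_i with c_a <> 0 puts p_a in A_a :&: (A_j + <p_i, i <> a>),
   whose rank is below j because A_a and A_j are skew; so there are only
   O(q^((n-1)(j-1)) * q^(j-2)) = O(q^(n(j-1)-1)) prefixes (p_0, ..., p_(j-1)),
   and the product is again O(q^(n^2-1)). *)

From HB Require Import structures.
From mathcomp Require Import all_boot all_order all_algebra mxabelem.
From mathcomp Require Import zify.
Set Implicit Arguments. Unset Strict Implicit. Unset Printing Implicit Defensive.
Import GRing.Theory.
Local Open Scope ring_scope.

Lemma leq_card_bigcup (I T : finType) (P : pred I) (B : I -> {set T}) :
  (#|\bigcup_(i | P i) B i| <= \sum_(i | P i) #|B i|)%N.
Proof.
apply: (big_ind2 (fun (X : {set T}) k => #|X| <= k)%N) => [|X1 k1 X2 k2 le1 le2|//].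
  by rewrite cards0.
exact: leq_trans (leq_card_setU X1 X2).1 (leq_add le1 le2).
Qed.

Lemma card_ord_ltn m j : (j <= m)%N -> #|[pred i : 'I_m | (i < j)%N]| = j.
Proof.
move=> le_jm; have widen_inj : injective (widen_ord le_jm).
  by move=> i k /(congr1 val) e; apply: val_inj.
rewrite -[RHS]card_ord -cardsT -(card_imset _ widen_inj).
apply: eq_card => i; rewrite inE /=; apply/idP/imsetP => [lt_ij | [k _ ->]] //.
  by exists (Ordinal lt_ij); last exact: val_inj.
by rewrite /= ltn_ord.
Qed.

Lemma mxrank_addsmx_rV (F : fieldType) m N (S : 'M[F]_(m, N)) (v : 'rV_N) :
  ~~ (v <= S)%MS -> \rank (S + v)%MS = (\rank S).+1.
Proof.
move=> vS; have v_neq0 : v != 0 by apply: contraNneq vS => ->; rewrite sub0mx.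
rewrite mxrank_disjoint_sum ?rank_rV ?v_neq0 ?addn1 //.
apply/eqP; rewrite -mxrank_eq0; apply: contraNT vS; rewrite -lt0n => rank_cap.
have /andP[_ v_sub_cap] : (S :&: v == v)%MS.
  by rewrite -(mxrank_leqif_eq (capmxSr S v)) eqn_leq mxrankS ?capmxSr // rank_rV v_neq0.
exact: submx_trans v_sub_cap (capmxSl _ _).
Qed.

Lemma rank_capmx_addsmx_skew (F : fieldType) N m (B C : 'M[F]_N) (D : 'M_(m, N)) :
  skew_spaces B C -> (\rank (B :&: (C + D)) <= \rank D)%N.
Proof.
move=> /eqP; rewrite mxrank_eq0 => /eqP BC0; set E := (B :&: (C + D))%MS.
have EC0 : (E :&: C)%MS = 0.
  by apply/eqP; rewrite -submx0 -BC0 capmxS ?capmxSl.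
have : (\rank (E + C) <= \rank (C + D))%N.
  by rewrite mxrankS // addsmx_sub capmxSr addsmxSl.
rewrite mxrank_disjoint_sum // => le_EC.
by have := mxrank_adds_leqif C D; case=> le_CD _; lia.
Qed.

Section Points.
Variables (F : finFieldType) (N : nat).
Local Notation q := #|F|.

(* [<<v>>] only depends on the line spanned by [v], so its nonzero row is a
   canonical representative of the projective point of [v]. *)
Definition point_rep (v : 'rV[F]_N) : 'rV[F]_N := nz_row <<v>>%MS.

Definition points m (X : 'M[F]_(m, N)) : {set 'rV[F]_N} :=
  [set v | (v <= X)%MS && (v != 0) && (point_rep v == v)].

Lemma points_sub m (X : 'M[F]_(m, N)) v : v \in points X -> (v <= X)%MS.
Proof. by rewrite inE => /andP[/andP[]]. Qed.

Lemma points_neq0 m (X : 'M[F]_(m, N)) v : v \in points X -> v != 0.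
Proof. by rewrite inE => /andP[/andP[]]. Qed.

Lemma point_repZ c v : c != 0 -> point_rep (c *: v) = point_rep v.
Proof. by move=> c_neq0; rewrite /point_rep (eq_genmx (eqmx_scale _ c_neq0)). Qed.

Lemma point_rep_sub v : (point_rep v <= v)%MS.
Proof. by rewrite (submx_trans (nz_row_sub _)) ?genmxE. Qed.

Lemma point_rep_eq0 v : (point_rep v == 0) = (v == 0).
Proof. by rewrite nz_row_eq0 -submx0 genmxE submx0. Qed.

Lemma point_repK v : point_rep (point_rep v) = point_rep v.
Proof.
have [->|v_neq0] := eqVneq v 0.
  have /eqP rep0 : point_rep 0 == 0 by rewrite point_rep_eq0.
  by rewrite !rep0.
have /eqmxP eq_rep : (point_rep v == v)%MS.
  by rewrite -(mxrank_leqif_eq (point_rep_sub v)) !rank_rV point_rep_eq0.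
by rewrite {1}/point_rep (eq_genmx eq_rep).
Qed.

Lemma point_rep_points m (X : 'M[F]_(m, N)) v :
  (v <= X)%MS -> v != 0 -> point_rep v \in points X.
Proof.
move=> vX v_neq0.
by rewrite inE point_repK point_rep_eq0 v_neq0 eqxx (submx_trans (point_rep_sub v)).
Qed.

Lemma card_points_mul m (X : 'M[F]_(m, N)) : (#|points X| * q <= 2 * q ^ \rank X)%N.
Proof.
have scale_inj :
    {in setX [set~ 0] (points X) &, injective (fun cp : F * 'rV_N => cp.1 *: cp.2)}.
  move=> [c p] [d r]; rewrite !inE /= => /andP[c_neq0 /andP[/andP[_ p_neq0] /eqP rep_p]].
  move=> /andP[d_neq0 /andP[_ /eqP rep_r]] eq_cd.
  have eq_pr : p = r by rewrite -rep_p -rep_r -(point_repZ p c_neq0) eq_cd point_repZ.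
  rewrite -{}eq_pr in eq_cd *; congr (_, _); apply/eqP; rewrite -subr_eq0.
  by move/eqP: eq_cd; rewrite -subr_eq0 -scalerBl scaler_eq0 (negbTE p_neq0) orbF.
have le_scaled : (#|points X| * q.-1 <= q ^ \rank X)%N.
  rewrite -card_rowg -(cardsC1 0) mulnC -cardsX -(card_in_imset scale_inj).
  apply/subset_leq_card/subsetP => _ /imsetP[[c p] /setXP[_ pX] ->].
  by rewrite mem_rowg scalemx_sub ?points_sub.
apply: leq_trans (leq_mul (leqnn 2) le_scaled); rewrite mulnCA leq_mul2l.
by apply/orP; right; move: #|F| (card_finNzRing_gt1 F) => k; lia.
Qed.

Lemma card_points m (X : 'M[F]_(m, N)) : (#|points X| <= 2 * q ^ (\rank X).-1)%N.
Proof.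
have := card_points_mul X; move: #|F| (card_finNzRing_gt1 F) => k k_gt1.
case: (\rank X) => [|r] /=; first by nia.
by rewrite expnS mulnCA mulnC leq_pmul2l //; lia.
Qed.

Definition meet_point (U X : 'M[F]_N) : 'rV[F]_N := point_rep (nz_row (U :&: X)%MS).

Lemma meet_point_points (U X : 'M[F]_N) : meets U X -> meet_point U X \in points X.
Proof.
rewrite /meets lt0n mxrank_eq0 => cap_neq0.
by rewrite point_rep_points ?nz_row_eq0 // (submx_trans (nz_row_sub _)) ?capmxSr.
Qed.

Lemma meet_point_sub (U X : 'M[F]_N) : (meet_point U X <= U)%MS.
Proof.
by rewrite !(submx_trans (point_rep_sub _)) ?(submx_trans (nz_row_sub _)) ?capmxSl.
Qed.

End Points.

Section SpacesThrough.
Variables (F : finFieldType) (N k : nat).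
Local Notation q := #|F|.

Definition spaces_through r (S : 'M[F]_(r, N)) : {set 'M[F]_N} :=
  [set U in proj_spaces F N k | (S <= U)%MS].

Lemma meets_rank (U V : 'M[F]_N) : (N < \rank U + \rank V)%N -> meets U V.
Proof.
by rewrite /meets -mxrank_sum_cap => lt_N; have := rank_leq_col (U + V)%MS; lia.
Qed.

Lemma exists_skew_space r (S : 'M[F]_(r, N)) d :
  (\rank S + d <= N)%N -> exists T : 'M[F]_N, \rank T = d /\ (S :&: T)%MS = 0.
Proof.
move=> le_dN; exists ((pid_mx d : 'M_(N, \rank S^C)) *m row_base S^C)%MS; split.
  rewrite mxrankMfree ?row_base_free // rank_pid_mx //; first lia.
  by rewrite mxrank_compl; lia.
apply/eqP; rewrite -submx0 -(capmx_compl S) capmxS //.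
by rewrite -(eq_row_base (S^C)%MS) submxMl.
Qed.

(* U meets a fixed space T of rank N - k skew to S, and a point of U :&: T
   extends S; this costs at most 2 q^(N-k-1) choices per unit of rank. *)
Lemma card_spaces_through r (S : 'M[F]_(r, N)) : (\rank S <= k.+1)%N ->
  (#|spaces_through S| <= (2 * q ^ (N - k.+1)) ^ (k.+1 - \rank S))%N.
Proof.
move=> le_Sk; move Ed: (k.+1 - \rank S)%N => d.
elim: d r S le_Sk Ed => [|d IH] r S le_Sk Ed.
  rewrite expn0 -(cards1 <<S>>%MS) subset_leq_card //.
  apply/subsetP => U; rewrite !inE => /andP[/andP[/eqP genU /eqP rankU] SU].
  have /genmxP eq_SU : (S == U)%MS by rewrite -(mxrank_leqif_eq SU) rankU; lia.
  by rewrite eq_SU genU.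
have [T [rankT ST0]] : exists T : 'M[F]_N, \rank T = (N - k)%N /\ (S :&: T)%MS = 0.
  by apply: exists_skew_space; have := rank_leq_col S; lia.
have cover : spaces_through S \subset \bigcup_(t in points T) spaces_through (S + t)%MS.
  apply/subsetP => U; rewrite !inE => /andP[/andP[genU /eqP rankU] SU].
  apply/bigcupP; exists (meet_point U T).
    by rewrite meet_point_points // meets_rank // rankU rankT; have := rank_leq_col U; lia.
  by rewrite !inE genU rankU eqxx addsmx_sub SU meet_point_sub.
apply: leq_trans (subset_leq_card cover) _; apply: leq_trans (leq_card_bigcup _ _) _.
apply: (@leq_trans (\sum_(t in points T) (2 * q ^ (N - k.+1)) ^ d)%N).
  apply: leq_sum => t; rewrite inE => /andP[/andP[tT t_neq0] _].
  have tS : ~~ (t <= S)%MS.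
    by apply: contra t_neq0 => tS; rewrite -submx0 -ST0 sub_capmx tS.
  by apply: IH; rewrite mxrank_addsmx_rV //; lia.
rewrite sum_nat_const expnS leq_mul2r (leq_trans (card_points T)) ?orbT //.
by rewrite rankT subnS.
Qed.

End SpacesThrough.

Section Tuples.
Variables (F : fieldType) (m N : nat).
Local Notation tuple := {ffun 'I_m -> 'rV[F]_N}.

Definition rowsmx (v : tuple) : 'M[F]_(m, N) := \matrix_i v i.

Definition prefix (v : tuple) (j : nat) : tuple :=
  [ffun i : 'I_m => if (i < j)%N then v i else 0].

Definition set_entry (v : tuple) (a : 'I_m) (x : 'rV[F]_N) : tuple :=
  [ffun i => if i == a then x else v i].

Lemma row_rowsmx (v : tuple) i : row i (rowsmx v) = v i.
Proof. exact: rowK. Qed.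

Lemma entry_sub_rowsmx (v : tuple) i : (v i <= rowsmx v)%MS.
Proof. by rewrite -row_rowsmx row_sub. Qed.

Lemma rowsmx_sub p (X : 'M[F]_(p, N)) (v : tuple) : (forall i, v i <= X)%MS -> (rowsmx v <= X)%MS.
Proof. by move=> vX; apply/row_subP => i; rewrite row_rowsmx. Qed.

Lemma rank_rowsmx_support (v : tuple) : (\rank (rowsmx v) <= #|support v|)%N.
Proof.
have -> : #|support v| = (\sum_i \rank <<v i>>)%N.
  rewrite -sum1_card big_mkcond; apply: eq_bigr => i _.
  by rewrite genmxE rank_rV supportE; case: (_ != 0).
apply: leq_trans (mxrank_sum_leqif _).1; rewrite mxrankS // rowsmx_sub // => i.
by rewrite (sumsmx_sup i) ?genmxE.
Qed.

Lemma rowsmx_prefix0 (v : tuple) : rowsmx (prefix v 0) = 0.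
Proof. by apply/row_matrixP => i; rewrite row_rowsmx ffunE row0. Qed.

Lemma prefix_all (v : tuple) : prefix v m = v.
Proof. by apply/ffunP => i; rewrite ffunE ltn_ord. Qed.

Lemma rowsmx_prefixS (v : tuple) (j : 'I_m) :
  (rowsmx (prefix v j.+1) :=: rowsmx (prefix v j) + v j)%MS.
Proof.
apply/eqmxP/andP; split.
  apply: rowsmx_sub => i; rewrite ffunE ltnS leq_eqVlt.
  have [/val_inj-> | _] /= := eqVneq (i : nat) j; first exact: addsmxSr.
  case: ifP => lt_ij; last by rewrite sub0mx.
  apply: submx_trans (addsmxSl _ _).
  by rewrite (submx_trans _ (entry_sub_rowsmx _ i)) ?ffunE ?lt_ij.
rewrite addsmx_sub; apply/andP; split.
  apply: rowsmx_sub => i; rewrite ffunE; case: ifP => lt_ij; last exact: sub0mx.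
  by rewrite (submx_trans _ (entry_sub_rowsmx _ i)) // ffunE ltnS ltnW.
by rewrite (submx_trans _ (entry_sub_rowsmx _ j)) // ffunE ltnSn.
Qed.

Lemma first_dependence (v : tuple) : \rank (rowsmx v) = m \/
  exists j : 'I_m, \rank (rowsmx (prefix v j)) = j /\ (v j <= rowsmx (prefix v j))%MS.
Proof.
suff : forall k, (k <= m)%N -> \rank (rowsmx (prefix v k)) = k \/
  exists j : 'I_m, \rank (rowsmx (prefix v j)) = j /\ (v j <= rowsmx (prefix v j))%MS.
  by move/(_ m (leqnn m)); rewrite prefix_all.
elim=> [|k IH] lt_km; first by left; rewrite rowsmx_prefix0 mxrank0.
have [rank_k | dep] := IH (ltnW lt_km); last by right.
pose j := Ordinal lt_km.
have [vj_dep | vj_indep] := boolP (v j <= rowsmx (prefix v j))%MS; first by right; exists j.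
by left; rewrite -[k.+1]/(j.+1) (rowsmx_prefixS v j) mxrank_addsmx_rV // rank_k.
Qed.

Lemma rowsmx_exchange (v : tuple) (w : 'rV[F]_N) : (w <= rowsmx v)%MS -> w != 0 ->
  exists a, v a != 0 /\ (v a <= w + rowsmx (set_entry v a 0))%MS.
Proof.
move=> /submxP[lam ->] w_neq0.
have lin u : lam *m rowsmx u = \sum_i lam 0 i *: u i.
  by rewrite mulmx_sum_row; apply: eq_bigr => i _; rewrite row_rowsmx.
have /existsP[a] : [exists a, lam 0 a *: v a != 0].
  by apply: contraR w_neq0 => /existsPn all0; rewrite lin big1 // => i _; apply/eqP/negbNE/all0.
rewrite scaler_eq0 negb_or => /andP[lam_a v_a]; exists a; split=> //.
have split_a : lam *m rowsmx v = lam 0 a *: v a + lam *m rowsmx (set_entry v a 0).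
  rewrite !lin (bigD1 a) //= [in RHS](bigD1 a) //= ffunE eqxx scaler0 add0r.
  by congr (_ + _); apply: eq_bigr => i ne_ia; rewrite ffunE (negbTE ne_ia).
have -> : v a = (lam 0 a)^-1 *: (lam *m rowsmx v - lam *m rowsmx (set_entry v a 0)).
  by rewrite split_a addrK scalerA mulVf // scale1r.
rewrite scalemx_sub // addmx_sub ?addsmxSl // eqmx_opp.
exact: submx_trans (submxMl _ _) (addsmxSr _ _).
Qed.

End Tuples.

Section MeetingSkewSpaces.
Variables (F : finFieldType) (n : nat) (A : 'I_n.+1 -> 'M[F]_(n.*2.+1)).
Hypothesis rankA : forall i, \rank (A i) = n.
Hypothesis skewA : forall i j, i != j -> skew_spaces (A i) (A j).
Hypothesis n_gt0 : (0 < n)%N.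
Local Notation N := n.*2.+1.
Local Notation q := #|F|.
Local Notation tuple := {ffun 'I_n.+1 -> 'rV[F]_N}.

Definition point_tuples (I : {pred 'I_n.+1}) := pfamily 0 I (fun i => points (A i)).

Lemma card_point_tuples I : (#|point_tuples I| <= (2 * q ^ n.-1) ^ #|I|)%N.
Proof.
rewrite card_pfamily foldrE big_map big_enum /= -prod_nat_const.
by apply: leq_prod => i _; have := card_points (A i); rewrite rankA.
Qed.

Definition dependent_tuples (j : 'I_n.+1) : {set tuple} :=
  [set v in point_tuples [pred i : 'I_n.+1 | (i < j)%N]
     | (\rank (rowsmx v) == j) && ((rowsmx v :&: A j)%MS != 0)].

Lemma dependent_tuples_cover (j : 'I_n.+1) : dependent_tuples j \subset
  \bigcup_(a : 'I_n.+1 | (a < j)%N)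
     \bigcup_(u in point_tuples [predD1 [pred i : 'I_n.+1 | (i < j)%N] & a])
       set_entry u a @: points (A a :&: (A j + rowsmx u))%MS.
Proof.
apply/subsetP => v; rewrite inE.
case/andP => /pfamilyP[/subsetP supp_v points_v] /andP[_ cap_neq0].
have [w w_cap w_neq0] := rowV0Pn cap_neq0.
have [a [va_neq0 va_sub]] := rowsmx_exchange (submx_trans w_cap (capmxSl _ _)) w_neq0.
have lt_aj : (a < j)%N by apply: supp_v; rewrite supportE.
apply/bigcupP; exists a => //; apply/bigcupP; exists (set_entry v a 0).
  apply/pfamilyP; split.
    apply/subsetP => i; rewrite supportE ffunE inE /=.
    have [-> | ne_ia] := eqVneq i a; first by rewrite eqxx.
    by move=> /supp_v.
  by move=> i /andP[ne_ia lt_ij]; rewrite ffunE (negbTE ne_ia); apply: points_v.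
apply/imsetP; exists (v a).
  have := points_v a lt_aj; rewrite !inE sub_capmx => /andP[/andP[-> ->] ->].
  by rewrite (submx_trans va_sub) ?addsmxS ?(submx_trans w_cap) ?capmxSr.
by apply/ffunP => i; rewrite !ffunE; have [->|] := eqVneq i a.
Qed.

Lemma card_dependent_tuples (j : 'I_n.+1) :
  (#|dependent_tuples j| * q <= j * (2 ^ j * q ^ (n * j.-1)))%N.
Proof.
have le_jn : (j <= n.+1)%N := ltnW (ltn_ord j).
apply: leq_trans (leq_mul (subset_leq_card (dependent_tuples_cover j)) (leqnn q)) _.
apply: leq_trans (leq_mul (leq_card_bigcup _ _) (leqnn q)) _.
rewrite big_distrl /=.
apply: (@leq_trans (\sum_(a in [pred a : 'I_n.+1 | (a < j)%N]) 2 ^ j * q ^ (n * j.-1))%N);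
  last by rewrite sum_nat_const card_ord_ltn.
apply: leq_sum => a lt_aj.
set I := [predD1 _ & a].
have card_I : #|I| = j.-1.
  have := cardD1 a [pred i : 'I_n.+1 | (i < j)%N].
  by rewrite card_ord_ltn // inE lt_aj add1n => ->.
apply: leq_trans (leq_mul (leq_card_bigcup _ _) (leqnn q)) _; rewrite big_distrl /=.
apply: (@leq_trans (\sum_(u in point_tuples I) 2 * q ^ j.-1)%N).
  apply: leq_sum => u /pfamilyP[supp_u _].
  apply: leq_trans (leq_mul (leq_imset_card _ _) (leqnn q)) (leq_trans (card_points_mul _) _).
  rewrite leq_mul2l leq_pexp2l ?(ltnW (card_finNzRing_gt1 F)) ?orbT //.
  have ne_aj : a != j by apply: contraTneq lt_aj => ->; rewrite ltnn.
  apply: leq_trans (rank_capmx_addsmx_skew _ (skewA ne_aj)) _.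
  by rewrite -card_I (leq_trans (rank_rowsmx_support u)) // subset_leq_card.
rewrite sum_nat_const; apply: leq_trans (leq_mul (card_point_tuples I) (leqnn _)) _.
rewrite card_I; case: (nat_of_ord j) lt_aj le_jn => // j' _ le_jn.
case: n le_jn => [|n'] le_jn; first by case: j' le_jn.
by apply: eq_leq; rewrite expnMn -expnM mulnACA -expnSr -expnD mulSn addnC.
Qed.

Definition meeting_spaces := [set U in proj_spaces F N n | [forall i, meets U (A i)]].

Lemma meeting_spaces_cover : meeting_spaces \subset
  [set <<rowsmx v>>%MS | v in point_tuples predT]
    :|: \bigcup_(j : 'I_n.+1) \bigcup_(v in dependent_tuples j) spaces_through n (rowsmx v).
Proof.
apply/subsetP => U; rewrite !inE => /andP[/andP[/eqP genU /eqP rankU] /forallP meetsU].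
pose p : tuple := [ffun i => meet_point U (A i)].
have p_points i : p i \in points (A i) by rewrite ffunE meet_point_points.
have p_sub i : (p i <= U)%MS by rewrite ffunE meet_point_sub.
have [indep | [j [rank_j dep_j]]] := first_dependence p.
  apply/orP; left; apply/imsetP; exists p.
    by apply/pfamilyP; split=> [|i _]; [apply/subsetP | exact: p_points].
  have /genmxP eq_pU : (rowsmx p == U)%MS.
    by rewrite -(mxrank_leqif_eq (rowsmx_sub p_sub)) indep rankU.
  by rewrite eq_pU genU.
apply/orP; right; apply/bigcupP; exists j => //; apply/bigcupP; exists (prefix p j).
  rewrite inE rank_j eqxx /=; apply/andP; split.
    apply/pfamilyP; split=> [|i]; last by rewrite inE ffunE => ->.
    by apply/subsetP => i; rewrite supportE ffunE inE /=; case: ifP; rewrite ?eqxx.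
  apply/rowV0Pn; exists (p j); last exact: points_neq0 (p_points j).
  by rewrite sub_capmx dep_j points_sub.
rewrite !inE genU rankU !eqxx; apply: rowsmx_sub => i; rewrite ffunE.
by case: ifP; rewrite ?sub0mx.
Qed.

Lemma card_through_dependent_tuples (j : 'I_n.+1) :
  ((\sum_(v in dependent_tuples j) #|spaces_through n (rowsmx v)|) * q
     <= n.+1 * 2 ^ n.+1 * q ^ (n ^ 2))%N.
Proof.
apply: (@leq_trans (#|dependent_tuples j| * q * (2 * q ^ n) ^ (n.+1 - j))).
  rewrite mulnAC leq_mul2r -sum_nat_const leq_sum ?orbT // => v.
  rewrite inE => /andP[_ /andP[/eqP rank_v _]].
  have codim : (n.*2.+1 - n.+1 = n)%N by rewrite -addnn; lia.
  have := @card_spaces_through F N n _ (rowsmx v); rewrite codim rank_v.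
  by apply; exact: ltnW (ltn_ord j).
apply: leq_trans (leq_mul (card_dependent_tuples j) (leqnn _)) _.
have le_jn : (j <= n)%N by rewrite -ltnS ltn_ord.
case: (nat_of_ord j) le_jn => [|j'] le_jn; first by rewrite !mul0n.
rewrite -!mulnA leq_mul ?leqW //; apply: eq_leq.
have split_n : (n = j' + (n - j'))%N by rewrite subnKC // ltnW.
rewrite subSS /= -mulnn; move: (n - j')%N split_n => d ->.
rewrite expnMn -expnM mulnDr -addSn !expnD; lia.
Qed.

Lemma card_meeting_spaces_mul : (#|meeting_spaces| * q
   <= 2 ^ n.+1 * q ^ (n ^ 2) + n.+1 * (n.+1 * 2 ^ n.+1 * q ^ (n ^ 2)))%N.
Proof.
apply: leq_trans (leq_mul (subset_leq_card meeting_spaces_cover) (leqnn q)) _.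
apply: leq_trans (leq_mul (leq_card_setU _ _).1 (leqnn q)) _.
rewrite mulnDl; apply: leq_add.
  apply: leq_trans (leq_mul (leq_imset_card _ _) (leqnn q)) _.
  apply: leq_trans (leq_mul (card_point_tuples _) (leqnn q)) _.
  rewrite card_ord; case: n n_gt0 => // n' _ /=.
  have -> : (n'.+1 ^ 2 = (n' * n'.+2).+1)%N by rewrite -mulnn; lia.
  by rewrite expnMn -expnM -mulnA -expnSr.
apply: leq_trans (leq_mul (leq_card_bigcup _ _) (leqnn q)) _.
rewrite big_distrl /=.
apply: (@leq_trans (\sum_(j < n.+1) n.+1 * 2 ^ n.+1 * q ^ (n ^ 2))%N);
  last by rewrite sum_nat_const card_ord.
apply: leq_sum => j _; apply: leq_trans (card_through_dependent_tuples j).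
by rewrite leq_mul2r (leq_trans (leq_card_bigcup _ _)) ?orbT.
Qed.

Lemma card_meeting_spaces :
  (#|meeting_spaces| <= (1 + n.+1 * n.+1) * 2 ^ n.+1 * q ^ (n ^ 2 - 1))%N.
Proof.
have q_gt0 : (0 < q)%N := ltnW (card_finNzRing_gt1 F).
rewrite -(leq_pmul2r q_gt0); apply: leq_trans card_meeting_spaces_mul _.
have -> : (q ^ (n ^ 2) = q ^ (n ^ 2 - 1) * q)%N.
  by rewrite -expnSr subn1 prednK // expn_gt0 n_gt0.
by apply: eq_leq; move: (2 ^ n.+1)%N (q ^ (n ^ 2 - 1))%N q => a b c; lia.
Qed.

End MeetingSkewSpaces.

Theorem mainTheorem9 (n : nat) (hn : (2 <= n)%N) :
  exists C : nat,
    forall (F : finFieldType) (A : 'I_n.+1 -> 'M[F]_(n.*2.+1)),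
      (forall i, \rank (A i) = n) ->
      (forall i j : 'I_n.+1, i != j -> skew_spaces (A i) (A j)) ->
      (#|[set U in proj_spaces F n.*2.+1 n | [forall i, meets U (A i)]]|
         <= C * #|F| ^ (n ^ 2 - 1))%N.
Proof.
exists ((1 + n.+1 * n.+1) * 2 ^ n.+1)%N => F A rankA skewA.
exact: card_meeting_spaces rankA skewA (ltnW hn).
Qed.
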